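(* Let $A$ be a non-trivial (i.e. $A\neq\{0\}$) commutative Banach algebra, let $a\in A$, $c\in\mathbb C$, and let $M=cI+M_a$, where $M_a\in L(A)$ is the multiplication operator $M_ab=ab$. Then the operator $M\oplus M$ on $A\oplus A$ is not cyclic.
   Context: A Banach algebra is a complex algebra, possibly without unit, with a complete submultiplicative norm. An operator $T\in L(X)$ on a topological vector space $X$ is cyclic if there is $x\in X$ such that the linear span of $\{T^nx:n\ge 0\}$ is dense in $X$. *)

From HB Require Import structures.
From mathcomp Require Import all_boot all_order all_algebra.
From mathcomp Require Import all_classical all_reals all_analysis.
From mathcomp Require Import complex.
Set Implicit Arguments. Unset Strict Implicit. Unset Printing Implicit Defensive.
Import Order.TTheory GRing.Theory Num.Theory.
Local Open Scope classical_set_scope.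
Local Open Scope ring_scope.

Definition orbit_span (K : numDomainType) (V : lmodType K) (T : V -> V) (x : V)
  : set V :=
  [set y | exists (n : nat) (l : 'I_n -> K), y = \sum_(k < n) l k *: iter k T x].

Definition cyclic_op (K : numDomainType) (V : tvsType K) (T : V -> V) : Prop :=
  exists x : V, closure (orbit_span T x) = setT.

(* mul makes the (complete) normed space A a commutative (possibly non-unital)
   Banach algebra over K: associative, commutative, bilinear (linearity in the
   first argument + commutativity), with submultiplicative norm. Completeness is
   carried by the type A : completeNormedModType K. *)
Definition comm_banach_algebra (K : numFieldType) (A : completeNormedModType K)
  (mul : A -> A -> A) : Prop :=
  [/\ forall x y z, mul x (mul y z) = mul (mul x y) z,
      forall x y, mul x y = mul y x,
      forall (k : K) x y z, mul (k *: x + y) z = k *: mul x z + mul y z &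
      forall x y, `|mul x y| <= `|x| * `|y| ].

From HB Require Import structures.
From mathcomp Require Import all_boot all_order all_algebra.
From mathcomp Require Import all_classical all_reals all_analysis.
From mathcomp Require Import complex.
Import Order.TTheory GRing.Theory Num.Theory.
Local Open Scope classical_set_scope.
Local Open Scope ring_scope.
Local Open Scope complex_scope.

(* Let [(x, y)] be a cyclic vector of [M (+) M].  Since [M] commutes with the
   multiplication, every vector [(p, q)] of the orbit span, hence of its
   closure [A (+) A], satisfies [p y = q x].  Testing with [(0, z)] and [(z, 0)]
   shows that [x] and [y] annihilate [A], so [M] acts on them as the scalar [c]
   and the orbit span lies in the line [{(s x, s y)}].  A line is not dense in
   [A (+) A] when [A <> 0]: it lies in the closed set
   [{(p, q) | |p| |y| = |q| |x|}] (or in [{(p, q) | p = 0}] when [x = 0]). *)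

Lemma orbit_span_ind (K : numDomainType) (V : lmodType K) (T : V -> V) (x : V)
    (P : set V) :
  P 0 -> (forall u v, P u -> P v -> P (u + v)) ->
  (forall k (l : K), P (l *: iter k T x)) -> orbit_span T x `<=` P.
Proof. by move=> P0 PD PZ _ [n [l ->]]; apply: big_ind. Qed.

Lemma dense_closed_superset {T : topologicalType} {S C : set T} :
  closure S = setT -> closed C -> S `<=` C -> forall t, C t.
Proof.
move=> S_dense C_closed SC t; rewrite (closure_id C).1 //.
by apply: (closureS SC); rewrite S_dense.
Qed.

Lemma closed_zeroset {T : topologicalType} {K : numFieldType}
    {V : normedModType K} {g : T -> V} :
  continuous g -> closed [set t | g t = 0].
Proof.
move=> g_cont; apply: (proj1 (continuous_closedP g) g_cont [set 0]).
exact/accessible_closed_set1/hausdorff_accessible/norm_hausdorff.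
Qed.

Lemma line_not_dense {K : numFieldType} {V : normedModType K} {x y : V}
    {S : set (V * V)} :
  (exists e : V, e != 0) -> S `<=` [set (s *: x, s *: y) | s in [set: K]] ->
  closure S <> setT.
Proof.
move=> [e e_neq0] S_line S_dense.
have [x0 | x_neq0] := eqVneq x 0.
  have S_fst : S `<=` [set p | p.1 = 0].
    by move=> _ /S_line [s _ <-]; rewrite x0 scaler0.
  have fst_closed : closed [set p : V * V | p.1 = 0].
    exact: closed_zeroset (fun _ => cvg_fst).
  have /= e0 := dense_closed_superset S_dense fst_closed S_fst (e, 0).
  by rewrite e0 eqxx in e_neq0.
pose g (p : V * V) : K^o := `|p.1| * `|y| - `|p.2| * `|x|.
have g_cont : continuous g.
  move=> p; apply: cvgB; apply: cvgMr_tmp; apply: cvg_norm.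
    exact: cvg_fst.
  exact: cvg_snd.
have S_g : S `<=` [set p | g p = 0].
  by move=> _ /S_line [s _ <-]; rewrite /g /= !normrZ mulrAC subrr.
have /eqP := dense_closed_superset S_dense (closed_zeroset g_cont) S_g (0, x).
by rewrite /g /= normr0 mul0r sub0r oppr_eq0 mulf_eq0 orbb normr_eq0 (negbTE x_neq0).
Qed.

Section CommBanachAlgebra.
Context {K : numFieldType} {A : completeNormedModType K} {mul : A -> A -> A}.
Hypothesis hA : comm_banach_algebra mul.

Lemma mulA x y z : mul x (mul y z) = mul (mul x y) z.
Proof. by case: hA. Qed.

Lemma mulC x y : mul x y = mul y x.
Proof. by case: hA. Qed.

Lemma mul_norm x y : `|mul x y| <= `|x| * `|y|.
Proof. by case: hA. Qed.

Lemma mulDl x y z : mul (x + y) z = mul x z + mul y z.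
Proof. by case: hA => _ _ linl _; have := linl 1 x y z; rewrite !scale1r. Qed.

Lemma mul0l z : mul 0 z = 0.
Proof. by apply: (addrI (mul 0 z)); rewrite -mulDl !addr0. Qed.

Lemma mulZl k x z : mul (k *: x) z = k *: mul x z.
Proof. by case: hA => _ _ linl _; rewrite -[k *: x]addr0 linl mul0l addr0. Qed.

Lemma mulBl x y z : mul (x - y) z = mul x z - mul y z.
Proof. by rewrite mulDl -scaleN1r mulZl scaleN1r. Qed.

Lemma continuous_mull z : continuous (mul^~ z).
Proof.
move=> u; apply/cvgrPdist_lt => e e_gt0.
have z1_gt0 : 0 < `|z| + 1 by rewrite ltr_wpDl.
near=> v; rewrite -mulBl (le_lt_trans (mul_norm _ _)) //.
rewrite (@le_lt_trans _ _ (`|u - v| * (`|z| + 1))) ?ler_wpM2l ?lerDl //.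
rewrite -ltr_pdivlMr //; near: v.
exact: (@cvgr_dist_lt _ _ _ _ _ id u cvg_id _ (divr_gt0 e_gt0 z1_gt0)).
Unshelve. all: by end_near.
Qed.

End CommBanachAlgebra.

Definition dsum_op {V : Type} (T : V -> V) (p : V * V) : V * V := (T p.1, T p.2).

Lemma iter_dsum_op {V : Type} (T : V -> V) k (p : V * V) :
  iter k (dsum_op T) p = (iter k T p.1, iter k T p.2).
Proof. by elim: k => [|k /= ->] //; case: p. Qed.

Section Multiplier.
Context {K : numFieldType} {A : completeNormedModType K} {mul : A -> A -> A}.
Hypothesis hA : comm_banach_algebra mul.
Context {T : A -> A}.
Hypothesis mul_T : forall b w, mul (T b) w = mul b (T w).

Lemma mul_iter k b w : mul (iter k T b) w = mul b (iter k T w).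
Proof. by elim: k b w => //= k IH b w; rewrite mul_T IH -iterSr. Qed.

Lemma orbit_span_dsum_cross (x y : A) :
  orbit_span (dsum_op T) (x, y) `<=` [set p | mul p.1 y - mul p.2 x = 0].
Proof.
apply: orbit_span_ind => /=.
- by rewrite !(mul0l hA) subrr.
- move=> [p1 p2] [q1 q2] /= pP qP.
  by rewrite !(mulDl hA) opprD addrACA pP qP addr0.
- move=> k l; rewrite iter_dsum_op /= !(mulZl hA) -scalerBr mul_iter.
  by rewrite (mulC hA x) subrr scaler0.
Qed.

Lemma dsum_cyclic_vector_annihilates {x y : A} :
  closure (orbit_span (dsum_op T) (x, y)) = setT ->
  forall z, mul x z = 0 /\ mul y z = 0.
Proof.
move=> xy_dense z.
have cross_closed : closed [set p : A * A | mul p.1 y - mul p.2 x = 0].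
  apply: closed_zeroset => p; apply: cvgB.
    exact: (continuous_comp cvg_fst (continuous_mull hA y p.1)).
  exact: (continuous_comp cvg_snd (continuous_mull hA x p.2)).
have cross := dense_closed_superset xy_dense cross_closed (orbit_span_dsum_cross x y).
split.
- by have /= /eqP := cross (0, z); rewrite (mul0l hA) sub0r oppr_eq0 (mulC hA) => /eqP.
- by have /= := cross (z, 0); rewrite (mul0l hA) subr0 (mulC hA).
Qed.

Context {c : K}.
Hypothesis T_annihilator : forall b, (forall z, mul b z = 0) -> T b = c *: b.

Lemma orbit_span_dsum_annihilators {x y : A} :
  (forall z, mul x z = 0) -> (forall z, mul y z = 0) ->
  orbit_span (dsum_op T) (x, y) `<=` [set (s *: x, s *: y) | s in [set: K]].
Proof.
move=> x_ann y_ann.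
have iterT b k : (forall z, mul b z = 0) -> iter k T b = c ^+ k *: b.
  move=> b_ann; elim: k => [|k /= ->]; first by rewrite scale1r.
  by rewrite T_annihilator ?scalerA ?exprS // => z; rewrite (mulZl hA) b_ann ?scaler0.
apply: orbit_span_ind.
- by exists 0; rewrite ?scale0r.
- by move=> _ _ [s _ <-] [t _ <-]; exists (s + t); rewrite ?scalerDl.
- move=> k l; rewrite iter_dsum_op /= !iterT //.
  by exists (l * c ^+ k) => //; rewrite -!scalerA.
Qed.

End Multiplier.

Theorem proposition1p4 (R : realType) (A : completeNormedModType R[i])
  (mul : A -> A -> A) (hA : comm_banach_algebra mul)
  (nontriv : exists x : A, x != 0) (a : A) (c : R[i]) :
  let M := fun b : A => c *: b + mul a b in
  ~ cyclic_op (fun p : (A * A)%type => (M p.1, M p.2)).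
Proof.
move=> M [[x y] xy_dense].
have mul_M b w : mul (M b) w = mul b (M w).
  rewrite /M (mulC hA b) !(mulDl hA) !(mulZl hA) -(mulA hA) (mulC hA w b).
  by rewrite -(mulA hA) (mulC hA w b).
have M_annihilator b : (forall z, mul b z = 0) -> M b = c *: b.
  by move=> b_ann; rewrite /M (mulC hA) b_ann addr0.
have [x_ann y_ann] : (forall z, mul x z = 0) /\ (forall z, mul y z = 0).
  by split=> z; have [] := dsum_cyclic_vector_annihilates hA mul_M xy_dense z.
apply: (line_not_dense nontriv
  (orbit_span_dsum_annihilators hA M_annihilator x_ann y_ann)).
(* The two product topologies on [A * A] (via [tvsType] and via [normedModType])
   are convertible, but the ssreflect [exact:] unifier takes very long to see it. *)
exact xy_dense.
Qed.
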